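(* Let $G$ be a non-trivial finite abelian group, $H$ a subgroup of $G$, and let $f$ be an automorphism of $\mathcal{P}_{0}(G)$ with trivial pullback. Then: (1) $f(H)=H$, and $f$ restricts to an automorphism of $\mathcal{P}_{0}(H)$ with trivial pullback. (2) There is an isomorphism of monoids $\mathcal{P}_{0,H}(G)\simeq \mathcal{P}_{0}(G/H)$. Moreover, $f$ restricts to an automorphism of $\mathcal{P}_{0,H}(G)$. (3) For every nonzero $a\in G$, we have $f(G\setminus\{a\})=G\setminus\{b\}$ for some $b\in G$. Moreover, if $\operatorname{ord}(a)\geq 3$, then $f(G\setminus\{a\})=G\setminus\{a\}$.
   Context: For an additively written finite abelian group $G$, $\mathcal{P}_{0}(G)$ is the monoid of all subsets of $G$ containing $0$, with setwise addition $X+Y=\{x+y:x\in X,y\in Y\}$ and identity $\{0\}$. Every automorphism $f$ of $\mathcal{P}_0(G)$ maps $2$-element sets to $2$-element sets; the pullback of $f$ is the map $g:G\to G$ with $g(0)=0$ and $f(\{0,a\})=\{0,g(a)\}$ for nonzero $a$; $f$ has trivial pullback if $g$ is the identity, i.e. $f(\{0,a\})=\{0,a\}$ for all $a\in G$. For a subgroup $H$ of $G$, $\mathcal{P}_{0,H}(G)=H+\mathcal{P}_0(G)=\{H+X : X\in\mathcal{P}_0(G)\}$, the set of elements of $\mathcal{P}_0(G)$ divisible by $H$; it is a monoid under setwise addition with identity $H$. *)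

From mathcomp Require Import all_boot all_fingroup.
Set Implicit Arguments. Unset Strict Implicit. Unset Printing Implicit Defensive.
Import GroupScope.

(* The finite abelian group G is the whole carrier of a finGroupType gT
   (written multiplicatively: 1 plays the role of 0, * the role of +). *)

Definition is_mon_iso (A B : Type) (DA : A -> Prop) (mA : A -> A -> A) (eA : A)
  (DB : B -> Prop) (mB : B -> B -> B) (eB : B) (phi : A -> B) : Prop :=
  [/\ forall x, DA x -> DB (phi x),
      forall x y, DA x -> DA y -> phi x = phi y -> x = y,
      forall y, DB y -> exists2 x, DA x & phi x = y,
      forall x y, DA x -> DA y -> phi (mA x y) = mB (phi x) (phi y)
    & phi eA = eB].

Definition P0 (gT : finGroupType) (X : {set gT}) : Prop := 1 \in X.

Definition P0sub (gT : finGroupType) (H : {set gT}) (X : {set gT}) : Prop :=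
  (1 \in X) /\ X \subset H.

Definition P0H (gT : finGroupType) (H : {set gT}) (X : {set gT}) : Prop :=
  exists2 Y : {set gT}, 1 \in Y & X = H * Y.

Definition setmul (gT : finGroupType) (X Y : {set gT}) : {set gT} := X * Y.

Definition P0_aut (gT : finGroupType) (f : {set gT} -> {set gT}) : Prop :=
  is_mon_iso (@P0 gT) (@setmul gT) [set 1] (@P0 gT) (@setmul gT) [set 1] f.

Definition trivial_pullback (gT : finGroupType) (f : {set gT} -> {set gT}) : Prop :=
  forall a : gT, f [set 1; a] = [set 1; a].

From mathcomp Require Import all_boot all_fingroup cyclic.
Set Implicit Arguments. Unset Strict Implicit. Unset Printing Implicit Defensive.
Import GroupScope.

(* The automorphism f fixes every pair {1, a}, hence every product of pairs, and a
   subgroup H is the product of the pairs {1, h}, h in H: so f H = H. As X is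
   contained in H iff X H = H, and X lies in P_{0,H}(G) iff H X = X, both properties
   are preserved by f, which restricts accordingly; P_{0,H}(G) ~ P_0(G/H) is X |-> X/H.
   The complements G \ {a} are the sets X <> G of P_0(G) with X {1, c} = G for all
   c <> 1, so f maps each of them to another one. When d^2 <> 1, W = G \ {x, xd}
   satisfies W {1, d^-1} = G \ {x} and W {1, d} = G \ {xd}, so f(G \ {x}) = G \ {b} forces
   f(G \ {xd}) = G \ {bd}. If f(G \ {a}) = G \ {b} with b <> a and b^2 <> 1,
   shifting by b^-1 gives f(G \ {a b^-1}) = G \ {1}, impossible since 1 is in the
   image; if b^2 = 1, a first shift by a replaces (a, b) by (a^2, ba), and in the
   abelian group G, (ba)^2 = a^2 <> 1 when ord(a) >= 3. *)

Lemma mon_iso_restrict (A B : Type) (DA DA' : A -> Prop) (mA : A -> A -> A) (eA eA' : A)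
    (DB DB' : B -> Prop) (mB : B -> B -> B) (eB eB' : B) (phi : A -> B) :
  is_mon_iso DA mA eA DB mB eB phi ->
  (forall x, DA' x -> DA x) -> (forall y, DB' y -> DB y) ->
  (forall x, DA x -> DB' (phi x) <-> DA' x) -> phi eA' = eB' ->
  is_mon_iso DA' mA eA' DB' mB eB' phi.
Proof.
case=> _ phi_inj phi_surj phiM _ sDA sDB DB'phi phi_e'.
split=> // [x DA'x|x y /sDA Dx /sDA Dy|y DB'y|x y /sDA Dx /sDA Dy].
- exact/(DB'phi x (sDA x DA'x)).
- exact: phi_inj.
- have [x Dx phix] := phi_surj y (sDB y DB'y).
  by exists x => //; apply/(DB'phi x Dx); rewrite phix.
- exact: phiM.
Qed.

Section PairProducts.

Variable gT : finGroupType.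
Implicit Types (X : {set gT}) (a c d x y : gT).

Lemma mem_mul_pair X c y : (y \in X * [set 1; c]) = (y \in X) || (y * c^-1 \in X).
Proof. by rewrite mulgU mulg1 inE mem_rcoset. Qed.

Lemma prod_pairs_group (H : {group gT}) : \prod_(h <- enum H) [set 1; h] = H.
Proof.
have one_prod (s : seq gT) : 1 \in \prod_(k <- s) [set 1; k].
  apply: (big_ind (fun A : {set gT} => is_true (1 \in A))) => [|A B A1 B1|k _].
  - exact: set11.
  - by rewrite -[1]mulg1 mem_mulg.
  - exact: set21.
apply/eqP; rewrite eqEsubset; apply/andP; split.
  rewrite big_seq; apply: (big_ind (fun A : {set gT} => is_true (A \subset H))).
  - exact: sub1G.
  - exact: mul_subG.
  - by move=> h; rewrite mem_enum subUset !sub1set group1.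
apply/subsetP=> h; rewrite -mem_enum; elim: (enum H) => // k s IH.
rewrite big_cons inE => /orP[/eqP->|/IH hs].
  by rewrite -[X in X \in _]mulg1 mem_mulg ?set22.
by rewrite -[X in X \in _]mul1g mem_mulg ?set21.
Qed.

Lemma setC1_mul_pair a c : c != 1 -> ~: [set a] * [set 1; c] = [set: gT].
Proof.
move=> c1; apply/setP=> y; rewrite mem_mul_pair in_setT !inE -negb_and.
apply: contra c1 => /andP[/eqP-> /eqP]; rewrite -[X in _ = X]mulg1 => /mulgI/eqP.
by rewrite eq_invg1.
Qed.

Lemma mul_pairsT_setC1 X a :
  (forall c, c != 1 -> X * [set 1; c] = [set: gT]) -> a \notin X -> X = ~: [set a].
Proof.
move=> XcT aX; apply/setP=> y; rewrite !inE.
have [->|ya] := eqVneq y a; first exact/negbTE.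
have c1 : y^-1 * a != 1 by rewrite -(inj_eq (mulgI y)) mulKVg mulg1 eq_sym.
by have := in_setT a; rewrite -(XcT _ c1) mem_mul_pair (negbTE aX) invMg invgK mulKVg.
Qed.

Lemma setC2_mul_pair x d : d ^+ 2 != 1 -> ~: [set x; x * d] * [set 1; d^-1] = ~: [set x].
Proof.
move=> d2; have d1 : d != 1 by apply: contra d2 => /eqP->; rewrite expg1n.
apply/setP=> y; rewrite mem_mul_pair invgK !inE.
have [->|yx] := eqVneq y x; first by rewrite !eqxx !orbT.
have [->|yxd] := eqVneq y (x * d); last by [].
rewrite -mulgA -expg2 -[X in _ == X]mulg1 (inj_eq (mulgI x)) (negbTE d2) /=.
by rewrite (inj_eq (mulgI x)) expg2 -[X in _ == X]mulg1 (inj_eq (mulgI d)) (negbTE d1).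
Qed.

End PairProducts.

Lemma P0HE (gT : finGroupType) (H : {group gT}) (X : {set gT}) :
  P0H H X <-> 1 \in X /\ H * X = X.
Proof.
split=> [[Y Y1 ->]|[X1 HX]]; last by exists X.
by rewrite mulgA mulGid -[1]mulg1 mem_mulg.
Qed.

Lemma quotient_P0H_iso (gT : finGroupType) (H : {group gT}) :
  [set: gT] \subset 'N(H) ->
  is_mon_iso (P0H H) (@setmul gT) (H : {set gT})
    (fun Z : {set coset_of H} => (1 \in Z) /\ Z \subset [set: gT] / H)
    (@setmul (coset_of H)) [set 1] (fun X => X / H).
Proof.
move=> nHT; have nH (A : {set gT}) : A \subset 'N(H) := subset_trans (subsetT A) nHT.
split=> [X /P0HE[X1 _]|X Y /P0HE[_ HX] /P0HE[_ HY] eqXY|Z [Z1 _]|X Y _ _|].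
- by split; [have := mem_morphim (coset H) (group1 _) X1; rewrite morph1 | exact: quotientS].
- by rewrite -HX -HY -!quotientK ?eqXY.
- exists (coset H @*^-1 Z); last exact: cosetpreK.
  apply/P0HE; rewrite -[X in X * _]cosetpre1 -cosetpreM mul1g.
  by rewrite mem_morphpre ?group1 ?morph1.
- exact: quotientMl.
- exact: trivg_quotient.
Qed.

Section TrivialPullbackAutomorphism.

Variables (gT : finGroupType) (f : {set gT} -> {set gT}).
Hypotheses (autf : P0_aut f) (pbf : trivial_pullback f).
Implicit Types (X Y : {set gT}) (H : {group gT}) (a b d x : gT).

Lemma aut_P0 X : 1 \in X -> 1 \in f X.
Proof. by case: autf => fP0 _ _ _ _; apply: fP0. Qed.

Lemma aut_eq X Y : 1 \in X -> 1 \in Y -> (f X == f Y) = (X == Y).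
Proof.
case: autf => _ f_inj _ _ _ X1 Y1.
by apply/eqP/eqP=> [/f_inj|->]; last by []; apply.
Qed.

Lemma autM X Y : 1 \in X -> 1 \in Y -> f (X * Y) = f X * f Y.
Proof. by case: autf => _ _ _ fM _; apply: fM. Qed.

Lemma aut_group H : f H = H.
Proof.
rewrite -prod_pairs_group; set P := \prod_(h <- _) _.
suff [] : 1 \in P /\ f P = P by [].
apply: (big_ind (fun A : {set gT} => 1 \in A /\ f A = A)) => [|A B [A1 fA] [B1 fB]|h _].
- by split; [exact: set11 | case: autf].
- by rewrite autM // fA fB -[1]mulg1 mem_mulg.
- by rewrite set21 pbf.
Qed.

Lemma aut_subG H X : 1 \in X -> (f X \subset H) = (X \subset H).
Proof.
have subGE Y : 1 \in Y -> (Y \subset H) = (Y * H == H).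
  move=> Y1; apply/idP/eqP=> [sYH|<-]; last exact/mulg_subl/group1.
  by apply/eqP; rewrite eqEsubset mul_subG ?mulg_subr.
move=> X1; have XH1 : 1 \in X * H by rewrite -[1]mulg1 mem_mulg.
by rewrite !subGE ?aut_P0 // -[in f X * _](aut_group H) -autM // -{2}(aut_group H) aut_eq.
Qed.

Lemma aut_P0H H X : 1 \in X -> P0H H (f X) <-> P0H H X.
Proof.
move=> X1; have HX1 : 1 \in H * X by rewrite -[1]mulg1 mem_mulg.
have fHX : (H * f X == f X) = (H * X == X).
  by rewrite -[in H * f X](aut_group H) -autM // aut_eq.
split=> /P0HE[_ /eqP HX]; apply/P0HE; split; rewrite ?aut_P0 //.
  by apply/eqP; rewrite -fHX.
by apply/eqP; rewrite fHX.
Qed.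

Lemma aut_P0sub_iso H :
  is_mon_iso (P0sub H) (@setmul gT) [set 1] (P0sub H) (@setmul gT) [set 1] f.
Proof.
apply: (mon_iso_restrict autf) => [X []|X []|X X1|] //; last by case: autf.
by rewrite /P0sub aut_subG // (aut_P0 X1) X1.
Qed.

Lemma aut_P0H_iso H :
  is_mon_iso (P0H H) (@setmul gT) (H : {set gT}) (P0H H) (@setmul gT) (H : {set gT}) f.
Proof.
apply: (mon_iso_restrict autf) => [X /P0HE[]|X /P0HE[]|X X1|] //.
  exact: aut_P0H.
exact: aut_group.
Qed.

Lemma aut_setC1 a : a != 1 -> exists b, f (~: [set a]) = ~: [set b].
Proof.
move=> a1; have Ca1 : 1 \in ~: [set a] by rewrite !inE eq_sym.
have /subsetPn[b _ fCb] : ~~ ([set: gT] \subset f (~: [set a])).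
  rewrite subTset -(aut_group [set: gT]%G) aut_eq ?in_setT //.
  by apply/eqP=> /setP/(_ a); rewrite !inE eqxx.
exists b; apply: mul_pairsT_setC1 fCb => c c1.
by rewrite -pbf -autM ?set21 // setC1_mul_pair //; apply: (aut_group [set: gT]%G).
Qed.

Lemma aut_setC1_shift x d b : x != 1 -> d ^+ 2 != 1 -> x * d != 1 ->
  f (~: [set x]) = ~: [set b] -> f (~: [set x * d]) = ~: [set b * d].
Proof.
move=> x1 d2 xd1 fCx; have [b' fCxd] := aut_setC1 xd1.
set W := ~: [set x; x * d].
have W1 : 1 \in W by rewrite !inE negb_or ![1 == _]eq_sym x1.
have fWb : f W * [set 1; d^-1] = ~: [set b].
  by rewrite -pbf -autM ?set21 // setC2_mul_pair.
have fWb' : f W * [set 1; d] = ~: [set b'].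
  have dV2 : d^-1 ^+ 2 != 1 by rewrite expgVn eq_invg1.
  rewrite -pbf -autM ?set21 // -[d in [set 1; d]]invgK /W setUC.
  by rewrite -[X in [set _; X]](mulgK d x) setC2_mul_pair.
have : b \notin f W * [set 1; d^-1] by rewrite fWb !inE eqxx.
rewrite mem_mul_pair invgK negb_or => /andP[bW bdW].
have : b * d \notin f W * [set 1; d] by rewrite mem_mul_pair mulgK negb_or bdW bW.
by rewrite fCxd fWb' !inE negbK => /eqP<-.
Qed.

Lemma aut_setC1_eq x b : x != 1 -> b ^+ 2 != 1 -> f (~: [set x]) = ~: [set b] -> b = x.
Proof.
move=> x1 b2 fCx; apply/eqP; apply: contraT => bx.
have xbV1 : x * b^-1 != 1 by rewrite -(inj_eq (mulIg b)) mulgKV mul1g eq_sym.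
have bV2 : b^-1 ^+ 2 != 1 by rewrite expgVn eq_invg1.
have C1 : 1 \in ~: [set x * b^-1] by rewrite !inE eq_sym.
by have := aut_P0 C1; rewrite (aut_setC1_shift x1 bV2 xbV1 fCx) mulgV !inE eqxx.
Qed.

Lemma aut_setC1_id a : abelian [set: gT] -> a != 1 -> (2 < #[a])%N ->
  f (~: [set a]) = ~: [set a].
Proof.
move=> cTT a1 oa; have a2 : a ^+ 2 != 1.
  by rewrite -order_dvdn; apply: contraTN oa => /dvdn_leq; rewrite -leqNgt; apply.
have [b fCa] := aut_setC1 a1; rewrite fCa.
have [b2|b2] := eqVneq (b ^+ 2) 1; last by rewrite (aut_setC1_eq a1 b2 fCa).
have aa1 : a * a != 1 by rewrite -expg2.
have ba2 : (b * a) ^+ 2 != 1.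
  by rewrite expgMn ?b2 ?mul1g //; apply: (centsP cTT); rewrite inE.
by have /mulIg-> := aut_setC1_eq aa1 ba2 (aut_setC1_shift a1 a2 aa1 fCa).
Qed.

End TrivialPullbackAutomorphism.

Theorem lemma3p1 (gT : finGroupType) (H : {group gT}) (f : {set gT} -> {set gT}) :
  abelian [set: gT] -> [set: gT] != 1 ->
  P0_aut f -> trivial_pullback f ->
  (* (1) *)
  (f H = H
   /\ is_mon_iso (P0sub H) (@setmul gT) [set 1] (P0sub H) (@setmul gT) [set 1] f
   /\ (forall a, a \in H -> f [set 1; a] = [set 1; a]))
  (* (2) *)
  /\ ((exists phi : {set gT} -> {set coset_of H},
        is_mon_iso (P0H H) (@setmul gT) (H : {set gT})
                   (fun Z : {set coset_of H} => (1 \in Z) /\ Z \subset [set: gT] / H)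
                   (@setmul (coset_of H)) [set 1] phi)
      /\ is_mon_iso (P0H H) (@setmul gT) (H : {set gT})
                    (P0H H) (@setmul gT) (H : {set gT}) f)
  (* (3) *)
  /\ (forall a : gT, a != 1 ->
        (exists b : gT, f (~: [set a]) = ~: [set b])
        /\ ((2 < #[a])%N -> f (~: [set a]) = ~: [set a])).
Proof.
move=> cTT _ autf pbf.
have nHT : [set: gT] \subset 'N(H) := sub_abelian_norm cTT (subsetT H).
split.
  by split; [exact: aut_group | split; [exact: aut_P0sub_iso | move=> a _; exact: pbf]].
split.
  by split; [exists (fun X => X / H); exact: quotient_P0H_iso | exact: aut_P0H_iso].
by move=> a a1; split; [exact: aut_setC1 | exact: aut_setC1_id].
Qed.
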